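(* Let $m\in\mathbb{N}$, let $u,v\in\ell^1(\mathbb{R}^m)$ and $q\in\partial\|\cdot\|_{\ell^1(\mathbb{R}^m)}(v)$. Then $$\mathrm{ICB}^q_{\ell^1(\mathbb{R}^m)}(u,v)=\sum_{i\in\mathbb{N}}G(u_i,q_i),$$ where $G:\mathbb{R}^m\times\mathbb{R}^m\to\mathbb{R}$ is given by $$G(u_i,q_i)=\begin{cases}|u_i|\big(1-|\cos(\varphi_i)|\,|q_i|\big), & |q_i|<|\cos(\varphi_i)|,\\ |u_i|\,|\sin(\varphi_i)|\sqrt{1-|q_i|^2}, & |q_i|\ge|\cos(\varphi_i)|,\end{cases}$$ and $\varphi_i$ denotes the angle between $u_i$ and $q_i$, i.e. $\cos(\varphi_i)|u_i||q_i|=u_i\cdot q_i$, with $\varphi_i:=0$ if $q_i=0$ or $u_i=0$.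
   Context: $\ell^1(\mathbb{R}^m)$ is the space of sequences $(x_i)_{i\in\mathbb{N}}$, $x_i\in\mathbb{R}^m$, with $\|x\|_{\ell^1(\mathbb{R}^m)}=\sum_i|x_i|<\infty$, $|\cdot|$ the Euclidean norm; subgradients lie in $\ell^\infty(\mathbb{R}^m)$ with pairing $\langle q,u\rangle=\sum_i q_i\cdot u_i$. Bregman distance: $D^q_{\ell^1(\mathbb{R}^m)}(u,v)=\|u\|_{\ell^1(\mathbb{R}^m)}-\|v\|_{\ell^1(\mathbb{R}^m)}-\langle q,u-v\rangle$. $\mathrm{ICB}^q_{\ell^1(\mathbb{R}^m)}(u,v)=\inf_{z\in\ell^1(\mathbb{R}^m)}\big(D^q_{\ell^1(\mathbb{R}^m)}(u-z,v)+D^{-q}_{\ell^1(\mathbb{R}^m)}(z,-v)\big)$. *)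

From HB Require Import structures.
From mathcomp Require Import all_boot all_order all_algebra.
From mathcomp Require Import all_classical all_reals all_analysis.
Set Implicit Arguments. Unset Strict Implicit. Unset Printing Implicit Defensive.
Import Order.TTheory GRing.Theory Num.Theory numFieldNormedType.Exports.
Local Open Scope ring_scope.
Local Open Scope classical_set_scope.

Section L1.
Variables (R : realType) (m : nat).

Definition vdot (x y : 'rV[R]_m) : R := \sum_(j < m) x 0 j * y 0 j.
Definition vnorm (x : 'rV[R]_m) : R := Num.sqrt (vdot x x).

Definition seqv := nat -> 'rV[R]_m.

Definition sum_oo (f : nat -> R) : R := limn (series f).

Definition is_l1 (u : seqv) : Prop := cvgn (series (fun i => vnorm (u i))).
Definition l1norm (u : seqv) : R := sum_oo (fun i => vnorm (u i)).
Definition is_linf (q : seqv) : Prop := exists M : R, forall i, vnorm (q i) <= M.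
Definition pairing (q u : seqv) : R := sum_oo (fun i => vdot (q i) (u i)).

Definition seq_sub (u w : seqv) : seqv := fun i => u i - w i.
Definition seq_opp (u : seqv) : seqv := fun i => - u i.

Definition subgrad_l1 (v q : seqv) : Prop :=
  is_linf q /\
  forall w : seqv, is_l1 w -> l1norm v + pairing q (seq_sub w v) <= l1norm w.

Definition bregman (q u v : seqv) : R :=
  l1norm u - l1norm v - pairing q (seq_sub u v).

Definition ICB (q u v : seqv) : R :=
  inf [set x : R | exists z : seqv, is_l1 z /\
        x = bregman q (seq_sub u z) v + bregman (seq_opp q) z (seq_opp v)].

Definition angle (a b : 'rV[R]_m) : R :=
  if (a == 0) || (b == 0) then 0
  else acos (vdot a b / (vnorm a * vnorm b)).

Definition Gfun (a b : 'rV[R]_m) : R :=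
  let phi := angle a b in
  if vnorm b < `|cos phi|
  then vnorm a * (1 - `|cos phi| * vnorm b)
  else vnorm a * `|sin phi| * Num.sqrt (1 - vnorm b ^+ 2).

End L1.

(* Since q is a subgradient of the l^1 norm at v, |q_i| <= 1 and <q, v> = ||v||, so the
   two Bregman distances in ICB^q(u, v) add up to sum_i F(u_i, q_i, z_i) with
   F(a, b, z) = |a - z| - b.(a - z) + |z| + b.z, in which v no longer appears.  The
   infimum over z therefore splits into coordinatewise infima: changing finitely many
   coordinates keeps z in l^1, and the remaining tail costs at most
   sum_(i >= N) F(u_i, q_i, 0) - G(u_i, q_i).  Each coordinatewise infimum is G(a, b):
   every s with |s + b| <= 1 and |s - b| <= 1 bounds F(a, b, .) from below by s.a, and
   in each regime of G an explicit such s is matched by an explicit (near-)minimizer z. *)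

From Pilot Require Import Defs.
From HB Require Import structures.
From mathcomp Require Import all_boot all_order all_algebra.
From mathcomp Require Import all_classical all_reals all_analysis.
From mathcomp Require Import ring lra.
Import Order.TTheory GRing.Theory Num.Theory numFieldNormedType.Exports.
Local Open Scope ring_scope.
Local Open Scope classical_set_scope.
Set Implicit Arguments. Unset Strict Implicit. Unset Printing Implicit Defensive.

Section EuclideanRow.
Variables (R : realType) (m : nat).
Implicit Types (x y z : 'rV[R]_m) (k t : R).

Lemma vdotC x y : vdot x y = vdot y x.
Proof. by apply: eq_bigr => j _; rewrite mulrC. Qed.

Lemma vdotDl x y z : vdot (x + y) z = vdot x z + vdot y z.
Proof. by rewrite /vdot -big_split; apply: eq_bigr => j _; rewrite !mxE mulrDl. Qed.

Lemma vdotDr x y z : vdot z (x + y) = vdot z x + vdot z y.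
Proof. by rewrite vdotC vdotDl !(vdotC z). Qed.

Lemma vdotZl k x y : vdot (k *: x) y = k * vdot x y.
Proof. by rewrite /vdot mulr_sumr; apply: eq_bigr => j _; rewrite !mxE mulrA. Qed.

Lemma vdotZr k x y : vdot y (k *: x) = k * vdot y x.
Proof. by rewrite vdotC vdotZl vdotC. Qed.

Lemma vdotNl x y : vdot (- x) y = - vdot x y.
Proof. by rewrite -scaleN1r vdotZl mulN1r. Qed.

Lemma vdotNr x y : vdot y (- x) = - vdot y x.
Proof. by rewrite vdotC vdotNl vdotC. Qed.

Lemma vdotBl x y z : vdot (x - y) z = vdot x z - vdot y z.
Proof. by rewrite vdotDl vdotNl. Qed.

Lemma vdotBr x y z : vdot z (x - y) = vdot z x - vdot z y.
Proof. by rewrite vdotDr vdotNr. Qed.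

Lemma vdot0l x : vdot 0 x = 0.
Proof. by rewrite -(scale0r 0) vdotZl mul0r. Qed.

Lemma vdot0r x : vdot x 0 = 0.
Proof. by rewrite vdotC vdot0l. Qed.

Lemma vdotxx_ge0 x : 0 <= vdot x x.
Proof. by apply: sumr_ge0 => j _; rewrite -expr2 sqr_ge0. Qed.

Lemma vdotxx_eq0 x : vdot x x = 0 -> x = 0.
Proof.
move=> /eqP; rewrite psumr_eq0 => [/allP x0|j _]; last by rewrite -expr2 sqr_ge0.
apply/rowP => j; rewrite !mxE.
by have := x0 j (mem_index_enum j); rewrite /= mulf_eq0 orbb => /eqP.
Qed.

Lemma vnorm_ge0 x : 0 <= vnorm x.
Proof. exact: sqrtr_ge0. Qed.

Lemma vnorm_sqr x : vnorm x ^+ 2 = vdot x x.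
Proof. by rewrite sqr_sqrtr // vdotxx_ge0. Qed.

Lemma vnorm_gt0 x : x != 0 -> 0 < vnorm x.
Proof.
move=> x0; rewrite lt_def vnorm_ge0 andbT; apply: contra x0 => /eqP nx0.
by apply/eqP/vdotxx_eq0; rewrite -vnorm_sqr nx0 expr0n.
Qed.

Lemma vnorm0 : vnorm (0 : 'rV[R]_m) = 0.
Proof. by rewrite /vnorm vdot0l sqrtr0. Qed.

Lemma vnormZ k x : vnorm (k *: x) = `|k| * vnorm x.
Proof. by rewrite /vnorm vdotZl vdotZr mulrA -expr2 sqrtrM ?sqr_ge0 // sqrtr_sqr. Qed.

Lemma vnormN x : vnorm (- x) = vnorm x.
Proof. by rewrite /vnorm vdotNl vdotNr opprK. Qed.

Lemma vnorm_le x t : 0 <= t -> vdot x x <= t ^+ 2 -> vnorm x <= t.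
Proof. by move=> t0 h; rewrite -(ger0_norm t0) -sqrtr_sqr; apply: ler_wsqrtr. Qed.

Lemma vnorm_eq x t : 0 <= t -> vdot x x = t ^+ 2 -> vnorm x = t.
Proof. by move=> t0 e; rewrite /vnorm e sqrtr_sqr ger0_norm. Qed.

Lemma cauchy_schwarz x y : `|vdot x y| <= vnorm x * vnorm y.
Proof.
rewrite -sqrtr_sqr /vnorm -sqrtrM ?vdotxx_ge0 //; apply: ler_wsqrtr.
have [->|y0] := eqVneq y 0; first by rewrite !vdot0r expr0n mulr0.
have yy0 : 0 < vdot y y by rewrite -vnorm_sqr exprn_gt0 // vnorm_gt0.
set w := vdot y y *: x - vdot x y *: y.
have ww : vdot w w = vdot y y * (vdot x x * vdot y y - vdot x y ^+ 2).
  by rewrite !(vdotBl, vdotBr, vdotZl, vdotZr) (vdotC y x); ring.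
by rewrite -subr_ge0 -(pmulr_rge0 _ yy0) -ww vdotxx_ge0.
Qed.

Lemma vdot_le x y : vdot x y <= vnorm x * vnorm y.
Proof. exact: le_trans (ler_norm _) (cauchy_schwarz x y). Qed.

Lemma ler_vnormD x y : vnorm (x + y) <= vnorm x + vnorm y.
Proof.
apply: vnorm_le; first by rewrite addr_ge0 ?vnorm_ge0.
by rewrite !(vdotDl, vdotDr) (vdotC y x) sqrrD -!vnorm_sqr; have := vdot_le x y; lra.
Qed.

End EuclideanRow.

Section ComponentInfimum.
Variables (R : realType) (m : nat).
Implicit Types (a b s z : 'rV[R]_m) (g : R).

(* The i-th summand of D^q(u - z, v) + D^(-q)(z, -v) once <q, v> = ||v||,
   with a = u_i, b = q_i. *)
Definition icb_cost a b z := vnorm (a - z) - vdot b (a - z) + vnorm z + vdot b z.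

Definition cost_infimum a b g := (forall z, g <= icb_cost a b z) /\
  (forall e, 0 < e -> exists z, icb_cost a b z <= g + e).

Lemma vdot_le_icb_cost a b s z : vnorm (s + b) <= 1 -> vnorm (s - b) <= 1 ->
  vdot s a <= icb_cost a b z.
Proof.
(* icb_cost a b z - s.a = (|a - z| - (s + b).(a - z)) + (|z| - (s - b).z), and both
   brackets are nonnegative by Cauchy-Schwarz. *)
move=> sb1 sb2; rewrite /icb_cost.
have := vdot_le (s + b) (a - z); have := vdot_le (s - b) z.
have : vnorm (s + b) * vnorm (a - z) <= vnorm (a - z) by rewrite ler_piMl ?vnorm_ge0.
have : vnorm (s - b) * vnorm z <= vnorm z by rewrite ler_piMl ?vnorm_ge0.
rewrite !(vdotBl, vdotBr, vdotDl, vdotDr); lra.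
Qed.

Lemma icb_cost_ge0 a b z : vnorm b <= 1 -> 0 <= icb_cost a b z.
Proof.
move=> b1; rewrite -(vdot0l a); apply: vdot_le_icb_cost; by rewrite ?add0r ?sub0r ?vnormN.
Qed.

Lemma cost_infimum_cert a b s z : vnorm (s + b) <= 1 -> vnorm (s - b) <= 1 ->
  icb_cost a b z = vdot s a -> cost_infimum a b (vdot s a).
Proof.
move=> sb1 sb2 zs; split=> [z'|e e0]; first exact: vdot_le_icb_cost.
by exists z; rewrite zs lerDl ltW.
Qed.

Lemma icb_costN a b z : icb_cost a (- b) (a - z) = icb_cost a b z.
Proof. by rewrite /icb_cost subKr !vdotNl; lra. Qed.

Lemma cost_infimumN a b g : cost_infimum a (- b) g -> cost_infimum a b g.
Proof.
move=> [lb ub]; split=> [z|e /ub [z zb]]; first by rewrite -icb_costN.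
by exists (a - z); rewrite -icb_costN subKr.
Qed.

Lemma cost_infimum0l b : vnorm b <= 1 -> cost_infimum 0 b 0.
Proof.
move=> b1; have := cost_infimum_cert (a := 0) (s := 0) (z := 0); rewrite vdot0l; apply.
- by rewrite add0r.
- by rewrite sub0r vnormN.
- by rewrite /icb_cost subrr vnorm0 !vdot0r; lra.
Qed.

Lemma cost_infimum0r a : cost_infimum a 0 (vnorm a).
Proof.
have [->|a0] := eqVneq a 0; first by rewrite vnorm0; apply: cost_infimum0l; rewrite vnorm0.
have na0 : vnorm a != 0 by rewrite gt_eqF ?vnorm_gt0.
have unit_a : vnorm ((vnorm a)^-1 *: a) = 1.
  by rewrite vnormZ ger0_norm ?invr_ge0 ?vnorm_ge0 // mulVf.
have -> : vnorm a = vdot ((vnorm a)^-1 *: a) a.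
  by rewrite vdotZl -vnorm_sqr expr2 mulKf.
apply: (cost_infimum_cert (z := 0)); rewrite ?addr0 ?subr0 ?unit_a //.
by rewrite /icb_cost subr0 vnorm0 !vdot0l vdotZl -vnorm_sqr expr2 mulKf //; lra.
Qed.

Lemma cost_infimum_unit a b : vnorm b = 1 -> cost_infimum a b 0.
Proof.
move=> b1; split=> [z|e e0]; first by rewrite icb_cost_ge0 ?b1.
have bb : vdot b b = 1 by rewrite -vnorm_sqr b1 expr1n.
set d := vdot a b; set na := vnorm a.
have dna : `|d| <= na by have := cauchy_schwarz a b; rewrite b1 mulr1.
have dge : - na <= d by have := ler_norm (- d); rewrite normrN; lra.
(* z = -l b costs |a + l b| - a.b - l, which is at most e once 2 e l >= |a|^2. *)
pose l := na ^+ 2 / (2 * e) + na.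
have le : 2 * e * l = na ^+ 2 + 2 * e * na by rewrite /l; field; rewrite gt_eqF.
have lna : na <= l by rewrite /l lerDr divr_ge0 ?sqr_ge0 // mulr_ge0 // ltW.
have l0 : 0 <= l by apply: le_trans lna; apply: vnorm_ge0.
have : vnorm (a + l *: b) <= l + d + e.
  apply: vnorm_le; first lra.
  rewrite !(vdotDl, vdotDr, vdotZl, vdotZr) bb (vdotC b a) -/d -vnorm_sqr -/na.
  have := sqr_ge0 (d + e); have := mulr_ge0 (ltW e0) (vnorm_ge0 a); nra.
exists (- (l *: b)); rewrite /icb_cost opprK vnormN vnormZ ger0_norm // b1.
rewrite vdotNr !vdotZr bb vdotDr vdotZr bb vdotC -/d; lra.
Qed.

Lemma cost_infimum_aligned a b : a != 0 ->
  vnorm b ^+ 2 * vnorm a <= `|vdot a b| -> cost_infimum a b (vnorm a - `|vdot a b|).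
Proof.
wlog d0 : b / 0 <= vdot a b => [aligned a0 hb|a0].
  have [d0|d0] := leP 0 (vdot a b); first exact: aligned.
  apply: cost_infimumN; move: hb; rewrite -vnormN -normrN -vdotNr.
  by apply: aligned; rewrite // vdotNr oppr_ge0 ltW.
rewrite ger0_norm // => hb.
have na0 : vnorm a != 0 by rewrite gt_eqF ?vnorm_gt0.
set k := (vnorm a)^-1.
have ka1 : vnorm (k *: a) = 1 by rewrite vnormZ ger0_norm ?invr_ge0 ?vnorm_ge0 // mulVf.
have kka : k * (k * vdot a a) = 1.
  by rewrite -vnorm_sqr mulrA -expr2 -exprMn mulVf // expr1n.
have kd : vdot b b <= k * vdot a b.
  by rewrite mulrC -vnorm_sqr ler_pdivlMr ?vnorm_gt0.
have -> : vnorm a - vdot a b = vdot (k *: a - b) a.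
  by rewrite vdotBl vdotZl -vnorm_sqr expr2 mulKf // vdotC.
apply: (cost_infimum_cert (z := 0)).
- by rewrite subrK ka1.
- apply: vnorm_le => //; rewrite expr1n !(vdotBl, vdotBr, vdotZl, vdotZr) kka (vdotC b a).
  lra.
- rewrite /icb_cost subr0 vnorm0 vdot0r vdotBl vdotZl -vnorm_sqr expr2 mulKf //.
  by rewrite vdotC; lra.
Qed.

Lemma cost_infimum_transverse a b s (r t : R) : vdot s b = 0 ->
  vnorm s ^+ 2 + vnorm b ^+ 2 = 1 -> `|r| <= t -> a = r *: b + t *: s ->
  cost_infimum a b (t * vnorm s ^+ 2).
Proof.
move=> sb0 sb1 /[dup] rt; rewrite ler_norml => /andP[rt1 rt2] ->.
have bs0 : vdot b s = 0 by rewrite vdotC.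
have sbp : vnorm (s + b) = 1.
  by apply: vnorm_eq; rewrite // expr1n !(vdotDl, vdotDr) sb0 bs0 -!vnorm_sqr; lra.
have sbm : vnorm (s - b) = 1.
  by apply: vnorm_eq; rewrite // expr1n !(vdotBl, vdotBr) sb0 bs0 -!vnorm_sqr; lra.
have -> : t * vnorm s ^+ 2 = vdot s (r *: b + t *: s).
  by rewrite vdotDr !vdotZr sb0 -vnorm_sqr; lra.
(* a - z and z are nonnegative multiples of the unit vectors s + b and s - b: both
   Cauchy-Schwarz steps of vdot_le_icb_cost are equalities. *)
apply: (cost_infimum_cert (z := ((t - r) / 2) *: (s - b))); rewrite ?sbp ?sbm //.
rewrite /icb_cost.
have -> : r *: b + t *: s - ((t - r) / 2) *: (s - b) = ((t + r) / 2) *: (s + b).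
  by apply/rowP => j; rewrite !mxE; field.
have l0 : 0 <= (t - r) / 2 by rewrite divr_ge0 // subr_ge0.
have mu0 : 0 <= (t + r) / 2 by rewrite divr_ge0 //; lra.
have s2 : vnorm s ^+ 2 = 1 - vnorm b ^+ 2 by lra.
rewrite !vnormZ sbp sbm !ger0_norm //.
by rewrite !vdotZr vdotDr vdotBr bs0 vdotDr !vdotZr sb0 -!vnorm_sqr s2; field.
Qed.

Lemma cost_infimum_oblique a b (c : R) : a != 0 -> b != 0 -> vnorm b < 1 ->
  vdot a b = c * (vnorm a * vnorm b) -> `|c| <= vnorm b ->
  cost_infimum a b (vnorm a * Num.sqrt (1 - c ^+ 2) * Num.sqrt (1 - vnorm b ^+ 2)).
Proof.
move=> a0 b0 b1 dc cb.
have na0 := vnorm_gt0 a0; have nb0 := vnorm_gt0 b0.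
have aa := vnorm_sqr a; have bb := vnorm_sqr b; have ba : vdot b a = vdot a b by rewrite vdotC.
set na := vnorm a in na0 dc aa *; set nb := vnorm b in nb0 b1 dc cb bb *.
have c2 : c ^+ 2 <= nb ^+ 2 by rewrite -[c ^+ 2]real_normK ?num_real // ler_sqr ?nnegrE // ltW.
have nb2 : nb ^+ 2 < 1 by nra.
set sg := Num.sqrt (1 - nb ^+ 2).
have sg0 : 0 < sg by rewrite sqrtr_gt0 subr_gt0.
have sg2 : sg ^+ 2 = 1 - nb ^+ 2 by rewrite sqr_sqrtr // subr_ge0 ltW.
have c1 : 0 < 1 - c ^+ 2 by rewrite subr_gt0; apply: le_lt_trans nb2.
set P := na * Num.sqrt (1 - c ^+ 2).
have P0 : 0 < P by rewrite mulr_gt0 // sqrtr_gt0.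
have P2 : P ^+ 2 = na ^+ 2 * (1 - c ^+ 2).
  by rewrite /P exprMn (sqr_sqrtr (ltW c1)).
(* a = r b + w with w orthogonal to b and |w| = P; the certificate is s = sg w / P. *)
set r := c * na / nb; set w := a - r *: b.
have wb : vdot w b = 0.
  by rewrite vdotBl vdotZl -bb dc /r; field; rewrite gt_eqF.
have ww : vdot w w = P ^+ 2.
  by rewrite P2 !(vdotBl, vdotBr, vdotZl, vdotZr) ba -aa -bb dc /r; field; rewrite gt_eqF.
set t := P / sg; set s := (sg / P) *: w.
have tsw : t *: s = w by rewrite scalerA mulrA divfK ?gt_eqF // divff ?gt_eqF // scale1r.
have ss : vnorm s ^+ 2 = sg ^+ 2.
  by rewrite vnorm_sqr vdotZl vdotZr ww; field; rewrite gt_eqF.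
have -> : P * sg = t * vnorm s ^+ 2 by rewrite ss /t; field; rewrite gt_eqF.
apply: (cost_infimum_transverse (r := r)).
- by rewrite vdotZl wb mulr0.
- by rewrite ss sg2 subrK.
- rewrite /r /t !normrM normfV (ger0_norm (ltW na0)) (ger0_norm (ltW nb0)).
  rewrite ler_pdivrMr // mulrAC ler_pdivlMr // -ler_sqr ?nnegrE; last 2 first.
  + by rewrite !mulr_ge0 ?normr_ge0 ?ltW.
  + by rewrite mulr_ge0 ?ltW.
  rewrite !exprMn (sqr_sqrtr (ltW c1)) sg2 real_normK ?num_real //.
  have := sqr_ge0 na; nra.
- by rewrite tsw /w addrC subrK.
Qed.

End ComponentInfimum.

Section Gfun.
Variables (R : realType) (m : nat).
Implicit Types (a b : 'rV[R]_m).

Lemma Gfun0l b : Gfun 0 b = 0.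
Proof. by rewrite /Gfun /angle eqxx /= cos0 sin0 normr1 normr0 vnorm0 !mul0r; case: ifP. Qed.

Lemma Gfun0r a : Gfun a 0 = vnorm a.
Proof. by rewrite /Gfun /angle eqxx orbT /= cos0 normr1 vnorm0 ltr01 mulr0 subr0 mulr1. Qed.

Lemma Gfun_unit a b : vnorm b = 1 -> Gfun a b = 0.
Proof. by move=> b1; rewrite /Gfun b1 ltNge cos_max /= expr1n subrr sqrtr0 mulr0. Qed.

Lemma GfunE a b : a != 0 -> b != 0 ->
  let c := vdot a b / (vnorm a * vnorm b) in
  Gfun a b = if vnorm b < `|c| then vnorm a * (1 - `|c| * vnorm b)
             else vnorm a * Num.sqrt (1 - c ^+ 2) * Num.sqrt (1 - vnorm b ^+ 2).
Proof.
move=> a0 b0 c.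
have ab0 : 0 < vnorm a * vnorm b by rewrite mulr_gt0 ?vnorm_gt0.
have : `|c| <= 1.
  by rewrite normrM normfV (ger0_norm (ltW ab0)) ler_pdivrMr // mul1r cauchy_schwarz.
rewrite ler_norml => c1.
rewrite /Gfun /angle (negPf a0) (negPf b0) /= -/c acosK ?in_itv //.
by rewrite sin_acos // (ger0_norm (sqrtr_ge0 _)).
Qed.

Lemma cost_infimum_Gfun a b : vnorm b <= 1 -> cost_infimum a b (Gfun a b).
Proof.
move=> b1.
have [->|a0] := eqVneq a 0; first by rewrite Gfun0l; apply: cost_infimum0l.
have [->|b0] := eqVneq b 0; first by rewrite Gfun0r; apply: cost_infimum0r.
have [nb1|nb1] := eqVneq (vnorm b) 1; first by rewrite Gfun_unit //; apply: cost_infimum_unit.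
have {nb1}{}b1 : vnorm b < 1 by rewrite lt_neqAle nb1.
rewrite GfunE //=; set c := _ / _.
have nab0 : 0 < vnorm a * vnorm b by rewrite mulr_gt0 ?vnorm_gt0.
have dc : vdot a b = c * (vnorm a * vnorm b) by rewrite /c mulfVK ?gt_eqF.
have [cb|cb] := ltP (vnorm b) `|c|; last exact: cost_infimum_oblique.
have ndc : `|vdot a b| = `|c| * (vnorm a * vnorm b) by rewrite dc normrM (ger0_norm (ltW nab0)).
have -> : vnorm a * (1 - `|c| * vnorm b) = vnorm a - `|vdot a b| by rewrite ndc; ring.
apply: cost_infimum_aligned => //; rewrite ndc.
have cbp : 0 < `|c| - vnorm b by rewrite subr_gt0.
have := mulr_gt0 nab0 cbp; nra.
Qed.

End Gfun.

Section SeriesSum.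
Variable R : realType.
Implicit Types f g : nat -> R.

Lemma sum_oo_ext f g : f =1 g -> sum_oo f = sum_oo g.
Proof. by move=> /funext ->. Qed.

Lemma sum_oo_D f g : cvgn (series f) -> cvgn (series g) ->
  sum_oo (fun i => f i + g i) = sum_oo f + sum_oo g.
Proof. exact: lim_seriesD. Qed.

Lemma sum_oo_B f g : cvgn (series f) -> cvgn (series g) ->
  sum_oo (fun i => f i - g i) = sum_oo f - sum_oo g.
Proof. exact: lim_seriesB. Qed.

Lemma sum_oo_N f : cvgn (series f) -> sum_oo (fun i => - f i) = - sum_oo f.
Proof. exact: lim_seriesN. Qed.

Lemma sum_oo_le f g : cvgn (series f) -> cvgn (series g) ->
  (forall i, f i <= g i) -> sum_oo f <= sum_oo g.
Proof. exact: lim_series_le. Qed.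

Lemma is_cvg_series_le_norm f g : (forall i, `|f i| <= g i) ->
  cvgn (series g) -> cvgn (series f).
Proof.
move=> fg cg; apply: normed_cvg; apply: series_le_cvg cg => i /=.
- exact: normr_ge0.
- exact: le_trans (normr_ge0 _) (fg i).
- exact: fg.
Qed.

Lemma sum_oo_finsupp f N : (forall i, (N <= i)%N -> f i = 0) ->
  cvgn (series f) /\ sum_oo f = \sum_(i < N) f i.
Proof.
move=> f0.
have sN n : (N <= n)%N -> series f n = series f N.
  elim: n => [|n IH]; first by rewrite leqn0 => /eqP ->.
  by rewrite leq_eqVlt => /orP[/eqP <- //|Nn]; rewrite seriesSr IH // f0 // addr0.
have cvgN : series f @ \oo --> series f N by apply: cvg_near_cst; exists N => // n /= /sN.
split; first exact: cvgP cvgN.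
by rewrite /sum_oo (cvg_lim _ cvgN) // /series /= big_mkord.
Qed.

Lemma sum_oo_delta i (c : R) :
  cvgn (series (fun j => if j == i then c else 0)) /\
  sum_oo (fun j => if j == i then c else 0) = c.
Proof.
have [|cvg_d ->] := @sum_oo_finsupp (fun j => if j == i then c else 0) i.+1.
  by move=> j ij; rewrite gtn_eqF.
split=> //; rewrite big_ord_recr /= eqxx big1 ?add0r // => j _.
by rewrite ltn_eqF.
Qed.

End SeriesSum.

Section InfimumOfSums.
Variables (R : realType) (T : Type) (F : nat -> T -> R) (g : nat -> R) (x0 : T).
Hypotheses (F_ge0 : forall i x, 0 <= F i x) (g_lb : forall i x, g i <= F i x)
  (g_approx : forall i e, 0 < e -> exists x, F i x <= g i + e)
  (cvg_F0 : cvgn (series (fun i => F i x0))).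

Lemma inf_term_ge0 i : 0 <= g i.
Proof. by apply/ler_addgt0Pr => e /(g_approx i) [x]; apply/le_trans/F_ge0. Qed.

Lemma is_cvg_series_inf : cvgn (series g).
Proof. by apply: series_le_cvg cvg_F0 => // i; rewrite ?inf_term_ge0. Qed.

Lemma sum_oo_near_inf e : 0 < e -> exists2 z : nat -> T,
  (exists N, forall i, (N <= i)%N -> z i = x0) & sum_oo (fun i => F i (z i)) <= sum_oo g + e.
Proof.
(* Take near-minimizers on the first N coordinates and x0 on the tail, whose excess over
   sum_oo g is the tail of the series of F i x0 - g i. *)
move=> e0; pose h i := F i x0 - g i.
have cvg_h : cvgn (series h) := is_cvg_seriesB cvg_F0 is_cvg_series_inf.
have e20 : 0 < e / 2 by rewrite divr_gt0.
have [N _ tailN] := (cvgrPdist_lt _ _).1 cvg_h _ e20.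
have tail : sum_oo h - \sum_(i < N) h i <= e / 2.
  have := tailN N (leqnn N); rewrite /series /= big_mkord => /ltW.
  exact: le_trans (ler_norm _).
pose eN := e / 2 / N.+1%:R.
have eN0 : 0 < eN by rewrite divr_gt0.
have /choice [y hy] : forall i, exists x, F i x <= g i + eN by move=> i; apply: g_approx.
pose k i := if (i < N)%N then F i (y i) - F i x0 else 0.
have [cvg_k sum_k] : cvgn (series k) /\ sum_oo k = \sum_(i < N) k i.
  by apply: sum_oo_finsupp => i Ni; rewrite /k ltnNge Ni.
exists (fun i => if (i < N)%N then y i else x0); first by exists N => i Ni; rewrite ltnNge Ni.
have -> : sum_oo (fun i => F i (if (i < N)%N then y i else x0)) =
    sum_oo g + sum_oo h + sum_oo k.
  have cvg_gh : cvgn (series (fun i => g i + h i)) := is_cvg_seriesD is_cvg_series_inf cvg_h.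
  rewrite -(sum_oo_D is_cvg_series_inf cvg_h) -(sum_oo_D cvg_gh cvg_k).
  by apply: sum_oo_ext => i; rewrite /h /k; case: ifP => _; ring.
have : sum_oo k <= \sum_(i < N) eN - \sum_(i < N) h i.
  rewrite sum_k -sumrB; apply: ler_sum => i _.
  by rewrite /k /h ltn_ord; have := hy i; lra.
have : \sum_(i < N) eN <= e / 2.
  rewrite sumr_const card_ord -[eN *+ N]mulr_natr /eN mulrAC ler_pdivrMr ?ltr0Sn //.
  by rewrite ler_pM2l // ler_nat.
lra.
Qed.

Lemma inf_sum_oo (P : (nat -> T) -> Prop) :
  (forall z, P z -> cvgn (series (fun i => F i (z i)))) ->
  (forall z, (exists N, forall i, (N <= i)%N -> z i = x0) -> P z) ->
  inf [set x | exists z, P z /\ x = sum_oo (fun i => F i (z i))] = sum_oo g.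
Proof.
move=> cvgP finP; set S := [set x | _].
have lbS : lbound S (sum_oo g).
  by move=> _ [z [Pz ->]]; apply: sum_oo_le (cvgP z Pz) _; [exact: is_cvg_series_inf|].
apply/le_anti/andP; split.
  apply/ler_addgt0Pr => e /sum_oo_near_inf [z fin_z ze].
  by apply: le_trans ze; apply: ge_inf; [exists (sum_oo g)|exists z; split => //; apply: finP].
apply: lb_le_inf lbS; exists (sum_oo (fun i => F i x0)), (fun=> x0); split => //.
by apply: finP; exists 0%N.
Qed.

End InfimumOfSums.

Section L1Bregman.
Variables (R : realType) (m : nat).
Implicit Types (u v q z : seqv R m).

Lemma l1_finsupp z N : (forall i, (N <= i)%N -> z i = 0) ->
  is_l1 z /\ l1norm z = \sum_(i < N) vnorm (z i).
Proof. by move=> z0; apply: sum_oo_finsupp => i /z0 ->; apply: vnorm0. Qed.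

Lemma is_cvg_series_vdot q z : (forall i, vnorm (q i) <= 1) -> is_l1 z ->
  cvgn (series (fun i => vdot (q i) (z i))).
Proof.
move=> q1; apply: is_cvg_series_le_norm => i.
by apply: le_trans (cauchy_schwarz _ _) _; rewrite ler_piMl ?vnorm_ge0.
Qed.

Lemma subgrad_l1_vnorm_le1 v q : is_l1 v -> subgrad_l1 v q -> forall i, vnorm (q i) <= 1.
Proof.
move=> hv [_ sub] i.
pose w j := if j == i then v j + q i else v j.
have [cvg_d sum_d] := sum_oo_delta i (vnorm (v i + q i) - vnorm (v i)).
have [_ sum_e] := sum_oo_delta i (vdot (q i) (q i)).
have wv j :
    vnorm (w j) = vnorm (v j) + (if j == i then vnorm (v i + q i) - vnorm (v i) else 0).
  by rewrite /w; case: eqP => [->|_] /=; lra.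
have l1w : is_l1 w by rewrite /is_l1 (funext wv); apply: is_cvg_seriesD hv cvg_d.
have qw : pairing q (Defs.seq_sub w v) = vdot (q i) (q i).
  rewrite /pairing -sum_e; apply: sum_oo_ext => j; rewrite /Defs.seq_sub /w.
  by case: eqP => [->|_]; [rewrite addrAC subrr add0r | rewrite subrr vdot0r].
have := sub w l1w; rewrite qw /l1norm (funext wv) (sum_oo_D hv cvg_d) sum_d -vnorm_sqr.
have := ler_vnormD (v i) (q i); have := vnorm_ge0 (q i); nra.
Qed.

Lemma subgrad_l1_pairing v q : is_l1 v -> subgrad_l1 v q -> pairing q v = l1norm v.
Proof.
move=> hv hq; have q1 := subgrad_l1_vnorm_le1 hv hq; have [_ sub] := hq.
have cvg_qv := is_cvg_series_vdot q1 hv.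
have [l1_0 norm_0] := @l1_finsupp (fun=> 0) 0 (fun _ _ => erefl).
have := sub _ l1_0; rewrite norm_0 big_ord0.
have -> : pairing q (Defs.seq_sub (fun=> 0) v) = - pairing q v.
  rewrite /pairing -(sum_oo_N cvg_qv); apply: sum_oo_ext => j.
  by rewrite /Defs.seq_sub sub0r vdotNr.
have : pairing q v <= l1norm v.
  apply: sum_oo_le cvg_qv hv _ => i.
  by apply: le_trans (vdot_le _ _) _; rewrite ler_piMl ?vnorm_ge0.
lra.
Qed.

Lemma bregman_sum_icb_cost u v q z : is_l1 u -> is_l1 v -> subgrad_l1 v q -> is_l1 z ->
  cvgn (series (fun i => icb_cost (u i) (q i) (z i))) /\
  bregman q (Defs.seq_sub u z) v + bregman (seq_opp q) z (seq_opp v) =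
    sum_oo (fun i => icb_cost (u i) (q i) (z i)).
Proof.
move=> hu hv hq hz; have q1 := subgrad_l1_vnorm_le1 hv hq.
have uz : is_l1 (Defs.seq_sub u z).
  apply: (@is_cvg_series_le_norm _ _ (fun i => vnorm (u i) + vnorm (z i))).
    by move=> i; rewrite ger0_norm ?vnorm_ge0 // -(vnormN (z i)) ler_vnormD.
  exact: is_cvg_seriesD hu hz.
have c_quz := is_cvg_series_vdot q1 uz; have c_qz := is_cvg_series_vdot q1 hz.
have c_qv := is_cvg_series_vdot q1 hv.
have c_diff : cvgn (series (fun i => vnorm (u i - z i) - vdot (q i) (u i - z i))).
  exact: is_cvg_seriesB uz c_quz.
have c_diffz :
    cvgn (series (fun i => vnorm (u i - z i) - vdot (q i) (u i - z i) + vnorm (z i))).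
  exact: is_cvg_seriesD c_diff hz.
have sum_cost : sum_oo (fun i => icb_cost (u i) (q i) (z i)) =
    l1norm (Defs.seq_sub u z) - pairing q (Defs.seq_sub u z) + l1norm z + pairing q z.
  by rewrite -(sum_oo_B uz c_quz) -(sum_oo_D c_diff hz) -(sum_oo_D c_diffz c_qz).
split; first exact: is_cvg_seriesD c_diffz c_qz.
have p1 : pairing q (Defs.seq_sub (Defs.seq_sub u z) v) =
    pairing q (Defs.seq_sub u z) - pairing q v.
  by rewrite /pairing -(sum_oo_B c_quz c_qv); apply: sum_oo_ext => i; rewrite vdotBr.
have p2 : pairing (seq_opp q) (Defs.seq_sub z (seq_opp v)) = - (pairing q z + pairing q v).
  rewrite /pairing -(sum_oo_D c_qz c_qv) -(sum_oo_N (is_cvg_seriesD c_qz c_qv)).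
  by apply: sum_oo_ext => i /=; rewrite /Defs.seq_sub /seq_opp vdotNl vdotBr vdotNr opprK.
have n_v : l1norm (seq_opp v) = l1norm v by apply: sum_oo_ext => i; apply: vnormN.
rewrite /bregman p1 p2 n_v sum_cost (subgrad_l1_pairing hv hq); lra.
Qed.

End L1Bregman.

Unset Implicit Arguments.
Theorem theorem6 (R : realType) (m : nat) (u v q : seqv R m) :
  is_l1 u -> is_l1 v -> subgrad_l1 v q ->
  ICB q u v = sum_oo (fun i => Gfun (u i) (q i)).
Proof.
move=> hu hv hq; have q1 := subgrad_l1_vnorm_le1 hv hq.
have -> : ICB q u v =
    inf [set x | exists z, is_l1 z /\ x = sum_oo (fun i => icb_cost (u i) (q i) (z i))].
  rewrite /ICB; congr inf; apply/seteqP; split=> _ [z [hz ->]]; exists z;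
  by rewrite (bregman_sum_icb_cost hu hv hq hz).2.
apply: (@inf_sum_oo _ _ (fun i => icb_cost (u i) (q i)) (fun i => Gfun (u i) (q i)) 0).
- by move=> i z; apply: icb_cost_ge0.
- by move=> i; have [] := cost_infimum_Gfun (u i) (q1 i).
- by move=> i; have [] := cost_infimum_Gfun (u i) (q1 i).
- have l1_0 := (@l1_finsupp R m (fun=> 0) 0 (fun _ _ => erefl)).1.
  by have [] := bregman_sum_icb_cost hu hv hq l1_0.
- by move=> z hz; have [] := bregman_sum_icb_cost hu hv hq hz.
- by move=> z [N /l1_finsupp []].
Qed.
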